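(* Let $a,b,c>0$ and let $\lambda_0>0>\lambda_1$, $\lambda_2>0$ be the three real roots of $p_3(\lambda)=\lambda^3-b\lambda^2-(a+c)\lambda+cb$, labeled so that $\lambda_0\in(\max(b,\sqrt c),\infty)$, $\lambda_1\in(-\infty,-\sqrt c)$, $\lambda_2\in(0,\min(b,\sqrt c))$. Set $d_0^\pm=\lambda_1\pm\lambda_2$, $d_1^\pm=\lambda_0\pm\lambda_2$, $d_2^\pm=\lambda_0\pm\lambda_1$. For $L\ge0$ define the $2\times2$ matrix $C^0=(c_{ij})$ by $$c_{11}=\sum_{k=0}^2(-1)^k\lambda_k^2\frac{d_k^-}{d_k^+}e^{\lambda_kL},\quad c_{12}=\sum_{k=0}^2(-1)^k\lambda_k d_k^-e^{\lambda_kL},$$ $$c_{21}=\sum_{k=0}^2(-1)^k(a+b\lambda_k)d_k^-e^{\lambda_kL},\quad c_{22}=\sum_{k=0}^2(-1)^k\frac{a+b\lambda_k}{\lambda_k}d_k^-d_k^+e^{\lambda_kL}.$$ Then $\det(C^0)>0$ for all $L\ge0$; in particular $C^0$ is regular, so the linear system $C^0 s=\mathbf b$ with $\mathbf b=(0,-\gamma a d_0^-d_1^-d_2^-/c)^T$ has a unique solution $s=(s_1,s_2)^T$ for every $\gamma\in\mathbb R$.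
   Context: In the paper this system determines the shooting parameters $s_1=T_f'(0)$, $s_2=T_s'(0)$ of a two-temperature boundary value problem; $\gamma$ is a real parameter. *)

From HB Require Import structures.
From mathcomp Require Import all_boot all_order all_algebra.
From mathcomp Require Import all_classical all_reals all_analysis.
Set Implicit Arguments. Unset Strict Implicit. Unset Printing Implicit Defensive.
Import Order.TTheory GRing.Theory Num.Theory.
Local Open Scope ring_scope.

Section Defs.
Variable R : realType.

Definition p3 (a b c x : R) : R := x ^+ 3 - b * x ^+ 2 - (a + c) * x + c * b.

Definition lam (l0 l1 l2 : R) (k : 'I_3) : R :=
  match val k with 0%N => l0 | 1%N => l1 | _ => l2 end.

Definition dm (l0 l1 l2 : R) (k : 'I_3) : R :=
  match val k with 0%N => l1 - l2 | 1%N => l0 - l2 | _ => l0 - l1 end.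
Definition dp (l0 l1 l2 : R) (k : 'I_3) : R :=
  match val k with 0%N => l1 + l2 | 1%N => l0 + l2 | _ => l0 + l1 end.

Definition c11 (l0 l1 l2 L : R) : R :=
  \sum_(k < 3) (-1) ^+ k * (lam l0 l1 l2 k) ^+ 2
     * (dm l0 l1 l2 k / dp l0 l1 l2 k) * expR (lam l0 l1 l2 k * L).
Definition c12 (l0 l1 l2 L : R) : R :=
  \sum_(k < 3) (-1) ^+ k * lam l0 l1 l2 k * dm l0 l1 l2 k
     * expR (lam l0 l1 l2 k * L).
Definition c21 (a b l0 l1 l2 L : R) : R :=
  \sum_(k < 3) (-1) ^+ k * (a + b * lam l0 l1 l2 k) * dm l0 l1 l2 k
     * expR (lam l0 l1 l2 k * L).
Definition c22 (a b l0 l1 l2 L : R) : R :=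
  \sum_(k < 3) (-1) ^+ k * ((a + b * lam l0 l1 l2 k) / lam l0 l1 l2 k)
     * dm l0 l1 l2 k * dp l0 l1 l2 k * expR (lam l0 l1 l2 k * L).

Definition C0 (a b l0 l1 l2 L : R) : 'M[R]_2 :=
  \matrix_(i < 2, j < 2)
    if val i == 0%N then (if val j == 0%N then c11 l0 l1 l2 L else c12 l0 l1 l2 L)
    else (if val j == 0%N then c21 a b l0 l1 l2 L else c22 a b l0 l1 l2 L).

Definition rhs (a c gamma l0 l1 l2 : R) : 'cV[R]_2 :=
  \col_(i < 2)
    if val i == 0%N then 0
    else - (gamma * a * (l1 - l2) * (l0 - l2) * (l0 - l1) / c).

End Defs.

From HB Require Import structures.
From mathcomp Require Import all_boot all_order all_algebra.
From mathcomp Require Import all_classical all_reals all_analysis.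
From mathcomp Require Import ring lra.
Import Order.TTheory GRing.Theory Num.Theory.
Local Open Scope ring_scope.

(* Vieta gives b = l0 + l1 + l2, and expanding det C^0 then leaves a combination
   m01 e^((l0+l1)L) + m02 e^((l0+l2)L) + m12 e^((l1+l2)L): the e^(2 lk L) terms
   cancel because the k-th summands satisfy c11_k c22_k = c12_k c21_k.  For the
   given ordering of the roots m02 > 0 and m12 < 0, while
   m01 + m02 + m12 = det C^0|_(L=0) = - b^2 (d0^- d1^- d2^-)^2 / (l0 l1 l2) > 0.
   As l1 < l2 < l0, for L >= 0 the exponentials satisfy
   e^((l1+l2)L) <= e^((l0+l1)L) <= e^((l0+l2)L), which makes such a combination
   positive whatever the sign of m01. *)

Lemma det_mx22 (R : comPzRingType) (A : 'M[R]_2) :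
  \det A = A 0 0 * A 1 1 - A 0 1 * A 1 0.
Proof.
rewrite (expand_det_row _ 0) !big_ord_recl big_ord0 /cofactor !det_mx11 !mxE /=.
rewrite expr0 expr1 mul1r mulN1r addr0 mulrN.
by congr (A _ _ * A _ _ - A _ _ * A _ _); apply: val_inj.
Qed.

Lemma mulmx_solution_unique (R : comUnitRingType) n (A : 'M[R]_n) (v : 'cV[R]_n) :
  A \in unitmx -> exists! s, A *m s = v.
Proof.
move=> A_unit; exists (invmx A *m v); split; first by rewrite mulmxA mulmxV ?mul1mx.
by move=> s <-; rewrite mulmxA mulVmx ?mul1mx.
Qed.

Section Vieta.
Context {R : realType} {a b c : R}.

Lemma p3_root_pair {x y : R} : x != y -> p3 a b c x = 0 -> p3 a b c y = 0 ->
  x ^+ 2 + x * y + y ^+ 2 - b * (x + y) = a + c.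
Proof.
move=> xy px py; apply/eqP; rewrite -subr_eq0.
have : (x - y) * (x ^+ 2 + x * y + y ^+ 2 - b * (x + y) - (a + c)) = 0.
  by rewrite -[RHS](subrr 0) -{1}px -py /p3; ring.
by move/eqP; rewrite mulf_eq0 (subr_eq0 x y) (negbTE xy).
Qed.

Lemma p3_vieta {l0 l1 l2 : R} : l0 != l1 -> l0 != l2 -> l1 != l2 ->
  p3 a b c l0 = 0 -> p3 a b c l1 = 0 -> p3 a b c l2 = 0 ->
  [/\ b = l0 + l1 + l2, a + c = - (l0 * l1 + l0 * l2 + l1 * l2)
    & c * b = - (l0 * l1 * l2)].
Proof.
move=> n01 n02 n12 r0 r1 r2.
have e01 := p3_root_pair n01 r0 r1; have e02 := p3_root_pair n02 r0 r2.
have eb : b = l0 + l1 + l2.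
  have : (l1 - l2) * (l0 + l1 + l2 - b) = 0.
    by rewrite -[RHS](subrr (a + c)) -{1}e01 -e02; ring.
  by move/eqP; rewrite mulf_eq0 !subr_eq0 (negbTE n12) => /eqP.
have eac : a + c = - (l0 * l1 + l0 * l2 + l1 * l2) by rewrite -e01 eb; ring.
split=> //; apply/eqP; rewrite -subr_eq0 -r0 /p3 eac eb; apply/eqP; ring.
Qed.

End Vieta.

Section DetCoefficients.
Context {R : realFieldType}.
Variables a b l0 l1 l2 : R.

Definition pair_coef (x y : R) : R := a * b * (x + y) + (b ^+ 2 - a) * x * y.

(* The signs are placed so that, for roots ordered as in the theorem, every
   factor of det_coef02 and det_coef12 is positive, apart from the leading minus
   of det_coef12. *)
Definition det_coef01 : R :=
  (l2 - l1) * (l0 - l2) * b * (l0 - l1) ^+ 2 * pair_coef l0 l1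
  / ((l1 + l2) * (l0 + l2) * l0 * l1).
Definition det_coef02 : R :=
  (l2 - l1) * (l0 - l1) * b * (l0 - l2) ^+ 2 * pair_coef l0 l2
  / (- (l1 + l2) * (l0 + l1) * l0 * l2).
Definition det_coef12 : R :=
  - ((l0 - l2) * (l0 - l1) * b * (l2 - l1) ^+ 2 * - pair_coef l1 l2
     / ((l0 + l2) * (l0 + l1) * - l1 * l2)).

Local Ltac positivity :=
  repeat first [ by lra | apply: divr_gt0 | apply: mulr_gt0
               | apply: exprn_gt0 | apply: addr_gt0 ].

Lemma pair_coef02_gt0 : 0 < a -> 0 < l2 -> l2 < l0 -> 0 < l0 + l1 ->
  b = l0 + l1 + l2 -> 0 < pair_coef l0 l2.
Proof.
move=> a_gt0 l2_gt0 l2_lt_l0 l0_l1_gt0 b_sum.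
have -> : pair_coef l0 l2 = a * (l0 * (l0 + l1) + l2 * b) + b ^+ 2 * l0 * l2.
  by rewrite /pair_coef b_sum; ring.
positivity.
Qed.

Lemma pair_coef12_lt0 : 0 < l2 -> l2 < l0 -> l1 + l2 < 0 -> 0 < l0 + l1 ->
  b = l0 + l1 + l2 -> a * b = l0 * l1 * l2 - (l0 * l1 + l0 * l2 + l1 * l2) * b ->
  pair_coef l1 l2 < 0.
Proof.
move=> l2_gt0 l2_lt_l0 l1_l2_lt0 l0_l1_gt0 b_sum a_vieta.
have b_gt0 : 0 < b by lra.
(* Eliminating [a] exhibits [b * pair_coef l1 l2] as a nonpositive term minus a
   positive one. *)
have e : b * pair_coef l1 l2 = (l1 + l2) * (l2 ^+ 2 + (l1 + l2) * (l0 + l1)) ^+ 2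
                              - b ^+ 2 * (b * l2 ^+ 2 + (l1 + l2) * (l0 + l1) * l1).
  transitivity (a * b * (b * (l1 + l2) - l1 * l2) + b ^+ 3 * l1 * l2).
    by rewrite /pair_coef; ring.
  by rewrite a_vieta b_sum; ring.
rewrite -(pmulr_rlt0 _ b_gt0) e.
have h1 : (l1 + l2) * (l2 ^+ 2 + (l1 + l2) * (l0 + l1)) ^+ 2 <= 0.
  by rewrite mulr_le0_ge0 ?sqr_ge0 ?ltW.
have h2 : 0 < b ^+ 2 * (b * l2 ^+ 2 + (- (l1 + l2)) * (l0 + l1) * (- l1)) by positivity.
lra.
Qed.

Lemma det_coef02_gt0 : 0 < a -> 0 < l2 -> l2 < l0 -> l1 + l2 < 0 -> 0 < l0 + l1 ->
  b = l0 + l1 + l2 -> 0 < det_coef02.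
Proof.
move=> a_gt0 l2_gt0 l2_lt_l0 l1_l2_lt0 l0_l1_gt0 b_sum.
have := pair_coef02_gt0 a_gt0 l2_gt0 l2_lt_l0 l0_l1_gt0 b_sum.
rewrite /det_coef02 => ?; positivity.
Qed.

Lemma det_coef12_lt0 : 0 < l2 -> l2 < l0 -> l1 + l2 < 0 -> 0 < l0 + l1 ->
  b = l0 + l1 + l2 -> a * b = l0 * l1 * l2 - (l0 * l1 + l0 * l2 + l1 * l2) * b ->
  det_coef12 < 0.
Proof.
move=> l2_gt0 l2_lt_l0 l1_l2_lt0 l0_l1_gt0 b_sum a_vieta.
have := pair_coef12_lt0 l2_gt0 l2_lt_l0 l1_l2_lt0 l0_l1_gt0 b_sum a_vieta.
rewrite /det_coef12 oppr_lt0 -oppr_gt0 => ?; positivity.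
Qed.

Lemma det_coef_sum : l0 != 0 -> l1 != 0 -> l2 != 0 ->
  l1 + l2 != 0 -> l0 + l2 != 0 -> l0 + l1 != 0 ->
  b = l0 + l1 + l2 -> b != 0 ->
  a * b = l0 * l1 * l2 - (l0 * l1 + l0 * l2 + l1 * l2) * b ->
  det_coef01 + det_coef02 + det_coef12 =
    b ^+ 2 * ((l0 - l1) * (l0 - l2) * (l2 - l1)) ^+ 2 / (l0 * - l1 * l2).
Proof.
move=> l0_neq0 l1_neq0 l2_neq0 l12_neq0 l02_neq0 l01_neq0 b_sum b_neq0 a_vieta.
rewrite /det_coef01 /det_coef02 /det_coef12 /pair_coef.
have -> : a = (l0 * l1 * l2 - (l0 * l1 + l0 * l2 + l1 * l2) * b) / b.
  by rewrite -a_vieta mulfK.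
move: b_neq0; rewrite b_sum => b_neq0; field.
by rewrite l0_neq0 l1_neq0 l2_neq0 l01_neq0 l02_neq0 l12_neq0 b_neq0.
Qed.

Lemma det_coef_sum_gt0 : 0 < l2 -> l2 < l0 -> l1 + l2 < 0 -> 0 < l0 + l1 ->
  b = l0 + l1 + l2 -> a * b = l0 * l1 * l2 - (l0 * l1 + l0 * l2 + l1 * l2) * b ->
  0 < det_coef01 + det_coef02 + det_coef12.
Proof.
move=> l2_gt0 l2_lt_l0 l1_l2_lt0 l0_l1_gt0 b_sum a_vieta.
rewrite det_coef_sum //; try by apply/eqP; lra.
positivity.
Qed.

End DetCoefficients.

Lemma det_C0E (R : realType) (a b l0 l1 l2 L : R) :
  l0 != 0 -> l1 != 0 -> l2 != 0 -> l1 + l2 != 0 -> l0 + l2 != 0 -> l0 + l1 != 0 ->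
  b = l0 + l1 + l2 ->
  \det (C0 a b l0 l1 l2 L) =
      det_coef01 a b l0 l1 l2 * (expR (l0 * L) * expR (l1 * L))
    + det_coef02 a b l0 l1 l2 * (expR (l0 * L) * expR (l2 * L))
    + det_coef12 a b l0 l1 l2 * (expR (l1 * L) * expR (l2 * L)).
Proof.
move=> l0_neq0 l1_neq0 l2_neq0 l12_neq0 l02_neq0 l01_neq0 ->.
rewrite det_mx22 !mxE /= /c11 /c12 /c21 /c22 !big_ord_recl !big_ord0 /=.
rewrite /lam /dm /dp /det_coef01 /det_coef02 /det_coef12 /pair_coef /bump /=.
field.
by rewrite l0_neq0 l1_neq0 l2_neq0 l01_neq0 l02_neq0 l12_neq0 ?oppr_eq0.
Qed.

Lemma ordered_comb_gt0 (R : realDomainType) (m01 m02 m12 x y z : R) :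
  m12 <= 0 -> 0 < m02 -> 0 < m01 + m02 + m12 ->
  z <= y -> 0 <= y -> y <= x -> 0 < x ->
  0 < m01 * y + m02 * x + m12 * z.
Proof.
move=> m12_le0 m02_gt0 sum_gt0 zy y_ge0 yx x_gt0.
have m12_zy : m12 * y <= m12 * z by rewrite ler_wnM2l.
have [m_ge0 | m_lt0] := leP 0 (m01 + m12).
- have : 0 <= (m01 + m12) * y by rewrite mulr_ge0.
  have : 0 < m02 * x by rewrite mulr_gt0.
  lra.
- have : (m01 + m12) * x <= (m01 + m12) * y by rewrite ler_wnM2l // ltW.
  have : 0 < (m01 + m02 + m12) * x by rewrite mulr_gt0.
  lra.
Qed.

Theorem lemma1 (R : realType) (a b c l0 l1 l2 : R) :
  0 < a -> 0 < b -> 0 < c ->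
  p3 a b c l0 = 0 -> p3 a b c l1 = 0 -> p3 a b c l2 = 0 ->
  Num.max b (Num.sqrt c) < l0 ->
  l1 < - Num.sqrt c ->
  0 < l2 -> l2 < Num.min b (Num.sqrt c) ->
  forall L : R, 0 <= L ->
    0 < \det (C0 a b l0 l1 l2 L) /\
    forall gamma : R, exists! s : 'cV[R]_2, C0 a b l0 l1 l2 L *m s = rhs a c gamma l0 l1 l2.
Proof.
move=> a_gt0 _ _ r0 r1 r2; rewrite gt_max lt_min => /andP[b_l0 c_l0] l1_c l2_gt0.
move=> /andP[l2_b l2_c] L L_ge0; have sqrt_c_ge0 := sqrtr_ge0 c.
have [b_sum ac_sum cb_prod] : [/\ b = l0 + l1 + l2,
    a + c = - (l0 * l1 + l0 * l2 + l1 * l2) & c * b = - (l0 * l1 * l2)].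
  by apply: p3_vieta => //; apply/eqP; lra.
have a_vieta : a * b = l0 * l1 * l2 - (l0 * l1 + l0 * l2 + l1 * l2) * b.
  by rewrite -[a * b](addrK (c * b)) -mulrDl ac_sum cb_prod; ring.
have l1_l2_lt0 : l1 + l2 < 0 by lra.
have l0_l1_gt0 : 0 < l0 + l1 by lra.
have l2_lt_l0 : l2 < l0 by lra.
have det_gt0 : 0 < \det (C0 a b l0 l1 l2 L).
  rewrite det_C0E //; try by apply/eqP; lra.
  have E12 : expR (l1 * L) <= expR (l2 * L) by rewrite ler_expR ler_wpM2r //; lra.
  have E20 : expR (l2 * L) <= expR (l0 * L) by rewrite ler_expR ler_wpM2r //; lra.
  apply: ordered_comb_gt0.
  - exact/ltW/det_coef12_lt0.
  - exact: det_coef02_gt0.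
  - exact: det_coef_sum_gt0.
  - by rewrite [X in _ <= X]mulrC ler_pM2l ?expR_gt0.
  - by rewrite mulr_ge0 ?expR_ge0.
  - by rewrite ler_pM2l ?expR_gt0.
  - by rewrite mulr_gt0 ?expR_gt0.
split=> // gamma; apply: mulmx_solution_unique.
by rewrite unitmxE unitfE gt_eqF.
Qed.
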